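(* Let $((h_n,\psi_n))\subset X_{2l}^{\rm conv}$ be a sequence such that $h_n$ converges to some $h\in\mathcal H_{2l}$ uniformly on compact subsets of $(0,2l)$ and $\psi_n$ converges to some $\psi\in BV(R_{2l})$ in $L^1(R_{2l})$. Then $(h,\psi)\in X_{2l}^{\rm conv}$.
   Context: Let $l>0$, $R_{2l}=(0,2l)\times(-1,1)$ with coordinates $(w_1,w_2)$. $\mathcal H_{2l}=\{h:[0,2l]\to[-1,1]\text{ convex},\ h(w_1)=h(2l-w_1)\ \forall w_1\}$. For $h\in\mathcal H_{2l}$, $SG_h=\{(w_1,w_2)\in R_{2l}:w_2<h(w_1)\}$. $X_{2l}^{\rm conv}=\{(h,\psi):h\in\mathcal H_{2l},\ \psi\in BV(R_{2l},[0,1]),\ \psi=0\text{ a.e. on }R_{2l}\setminus SG_h\}$. *)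

From HB Require Import structures.
From mathcomp Require Import all_boot all_order all_algebra.
From mathcomp Require Import all_classical all_reals all_analysis.
Set Implicit Arguments. Unset Strict Implicit. Unset Printing Implicit Defensive.
Import Order.TTheory GRing.Theory Num.Theory.
Import numFieldNormedType.Exports.
Local Open Scope classical_set_scope.
Local Open Scope ring_scope.

Section Defs.
Variable R : realType.

Definition leb2 := (@lebesgue_measure R \x @lebesgue_measure R)%E.

Definition Rect (l : R) : set (R * R) :=
  [set w | (0 < w.1 < 2 * l) /\ (-1 < w.2 < 1)].

Definition convex_on (a b : R) (h : R -> R) : Prop :=
  forall x y t, a <= x <= b -> a <= y <= b -> 0 <= t <= 1 ->
    h (t * x + (1 - t) * y) <= t * h x + (1 - t) * h y.

(* h in H_{2l}: h : [0,2l] -> [-1,1] convex and symmetric about l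
   (h is given on all of R; only its values on [0,2l] matter) *)
Definition H2l (l : R) (h : R -> R) : Prop :=
  [/\ convex_on 0 (2 * l) h,
      (forall x, 0 <= x <= 2 * l -> -1 <= h x <= 1) &
      (forall x, 0 <= x <= 2 * l -> h x = h (2 * l - x))].

Definition SG (l : R) (h : R -> R) : set (R * R) :=
  [set w | Rect l w /\ w.2 < h w.1].

Definition pd1 (phi : R * R -> R) (w : R * R) : R :=
  derive1 (fun t => phi (t, w.2)) w.1.
Definition pd2 (phi : R * R -> R) (w : R * R) : R :=
  derive1 (fun t => phi (w.1, t)) w.2.

Definition test_fun (l : R) (phi : R * R -> R) : Prop :=
  [/\ (forall w : R * R, derivable (fun t => phi (t, w.2)) w.1 1 /\
                         derivable (fun t => phi (w.1, t)) w.2 1),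
      continuous phi, continuous (pd1 phi), continuous (pd2 phi) &
      exists2 e : R, 0 < e & forall w : R * R,
        ~ ((e <= w.1 <= 2 * l - e) /\ (-1 + e <= w.2 <= 1 - e)) ->
        phi w = 0].

Definition total_variation (l : R) (psi : R * R -> R) : \bar R :=
  ereal_sup [set v | exists phi1 phi2 : R * R -> R,
    [/\ test_fun l phi1, test_fun l phi2,
        (forall w, phi1 w ^+ 2 + phi2 w ^+ 2 <= 1) &
        v = (\int[leb2]_(w in Rect l) (psi w * (pd1 phi1 w + pd2 phi2 w))%:E)%E]].

Definition BV (l : R) (psi : R * R -> R) : Prop :=
  leb2.-integrable (Rect l) (fun w => (psi w)%:E) /\
  (total_variation l psi < +oo)%E.

Definition Xconv (l : R) (h : R -> R) (psi : R * R -> R) : Prop :=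
  [/\ H2l l h, BV l psi,
      {ae leb2, forall w, Rect l w -> 0 <= psi w <= 1} &
      {ae leb2, forall w, Rect l w -> ~ SG l h w -> psi w = 0}].

End Defs.

(* If a nonnegative F is dominated a.e. by |psi_n - psi| for all large n, its integral is
   at most the L^1 distance, so F = 0 a.e.  Applied to the distance of psi to [0, 1] this
   gives 0 <= psi <= 1; applied to |psi| on the set where psi_n = 0 for all n >= N it gives
   psi = 0 a.e. there, for every N.  A point of R_2l strictly above the graph of h is, by
   pointwise convergence, above the graph of h_n for all large n, hence in such a set; and
   the graph of h is negligible because the convex symmetric h is monotone on each half of
   (0, 2l). *)

From HB Require Import structures.
From mathcomp Require Import all_boot all_order all_algebra.
From mathcomp Require Import all_classical all_reals all_analysis.
From mathcomp Require Import measurable_realfun.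
From mathcomp Require Import ring lra.
Import Order.TTheory GRing.Theory Num.Theory.
Import numFieldNormedType.Exports.
Local Open Scope classical_set_scope.
Local Open Scope ring_scope.

Section L1_limits.
Context {d} {T : measurableType d} {R : realType} {mu : {measure set T -> \bar R}}.

Lemma ae_eq0_integral_le0 (D : set T) (F : T -> R) :
  measurable D -> measurable_fun D F -> (forall x, D x -> 0 <= F x) ->
  (\int[mu]_(x in D) (F x)%:E <= 0)%E -> {ae mu, forall x, D x -> F x = 0}.
Proof.
move=> mD mF F_ge0 intF_le0.
have mEF : measurable_fun D (EFin \o F) by apply/measurable_EFinP.
have : (\int[mu]_(x in D) `|(EFin \o F) x| = 0)%E.
  rewrite (eq_integral (fun x => (F x)%:E)); last first.
    by move=> x /set_mem Dx /=; rewrite ger0_norm ?F_ge0.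
  apply/eqP; rewrite eq_le intF_le0 /=; apply: integral_ge0 => x Dx.
  by rewrite lee_fin F_ge0.
move/(ae_eq_integral_abs mu mD mEF).
by apply: filterS => x + Dx => /(_ Dx) /= [].
Qed.

Context {D : set T} {f : T -> R} {fs : nat -> T -> R}.
Hypotheses (mD : measurable D) (mf : measurable_fun D f)
  (mfs : forall n, measurable_fun D (fs n)).
Hypothesis fs_cvg :
  (fun n => \int[mu]_(x in D) (`|fs n x - f x|)%:E)%E @ \oo --> 0%E.

Let mdist n : measurable_fun D (fun x => (`|fs n x - f x|)%:E).
Proof.
apply/(measurable_EFinP _ (fun x => `|fs n x - f x|)).
exact: measurableT_comp (measurable_funB (mfs n) mf).
Qed.

Lemma ae_eq0_le_L1_dist (E : set T) (F : T -> R) (N : nat) :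
  measurable E -> E `<=` D -> measurable_fun E F -> (forall x, E x -> 0 <= F x) ->
  (forall n, (N <= n)%N -> {ae mu, forall x, E x -> F x <= `|fs n x - f x|}) ->
  {ae mu, forall x, E x -> F x = 0}.
Proof.
move=> mE ED mF F_ge0 F_le; apply: ae_eq0_integral_le0 => //.
apply: (cvge_to_ge fs_cvg); exists N => // n /= Nn.
apply: (@le_trans _ _ (\int[mu]_(x in E) (`|fs n x - f x|)%:E)%E).
  apply: (@ae_ge0_le_integral _ _ _ mu E mE) _ _ _ (measurable_funS mD ED (mdist n)) _.
  - by move=> x Ex; rewrite lee_fin F_ge0.
  - exact/measurable_EFinP.
  - by move=> x _; rewrite lee_fin.
  - by apply: filterS (F_le n Nn) => x Fx Ex; rewrite lee_fin Fx.
by apply: ge0_subset_integral => // x _; rewrite lee_fin.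
Qed.

Lemma L1_limit_ae_itv (a b : R) :
  (forall n, {ae mu, forall x, D x -> a <= fs n x <= b}) ->
  {ae mu, forall x, D x -> a <= f x <= b}.
Proof.
move=> fs_ab.
pose F := (cst 0 \max (f \- cst b)) \+ (cst 0 \max (cst a \- f)).
have F_ge0 x : 0 <= F x by apply: addr_ge0; rewrite le_max lexx.
have : {ae mu, forall x, D x -> F x = 0}.
  apply: (@ae_eq0_le_L1_dist _ _ 0) => // [|n _].
    by apply: measurable_funD; apply: measurable_maxr => //;
      apply: measurable_funB.
  apply: filterS (fs_ab n) => x ab Dx; have /andP[an nb] := ab Dx.
  have n1 := ler_norm (fs n x - f x).
  have n2 : f x - fs n x <= `|fs n x - f x| by rewrite distrC ler_norm.
  by rewrite /F /=; case: (leP 0 (f x - b)); case: (leP 0 (a - f x)); lra.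
apply: filterS => x F0 Dx; have := F0 Dx; rewrite /F /=.
by case: (leP 0 (f x - b)); case: (leP 0 (a - f x)) => *; apply/andP; lra.
Qed.

Lemma L1_limit_ae_eq0 (N : nat) :
  {ae mu, forall x, D x -> (forall n, (N <= n)%N -> fs n x = 0) -> f x = 0}.
Proof.
pose E := D `&` [set x | forall n, (N <= n)%N -> fs n x = 0].
have mE : measurable E.
  have -> : E = \bigcap_n (D `&` [set x | (N <= n)%N -> fs n x = 0]).
    apply/seteqP; split=> [x [Dx fs0] n _|x fs0]; first by split=> // /fs0.
    by split; [case: (fs0 0%N I) | move=> n Nn; case: (fs0 n I) => _ /(_ Nn)].
  apply: bigcapT_measurable => n; case: leqP => Nn.
    rewrite (_ : [set x | true -> _] = fs n @^-1` [set 0]).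
      exact: mfs.
    by apply/seteqP; split=> x /=; [apply | move=> ->].
  by rewrite (_ : [set x | false -> _] = setT) ?setIT //; apply/seteqP.
have : {ae mu, forall x, E x -> `|f x| = 0}.
  apply: (@ae_eq0_le_L1_dist _ _ N) mE _ _ _ _ => //.
  - by move=> x [].
  - exact: measurableT_comp (measurable_funS mD (fun x => @proj1 _ _) mf).
  - by move=> n Nn; apply: aeW => x [_ fs0]; rewrite fs0 // sub0r normrN.
by apply: filterS => x f0 Dx fs0; apply/normr0_eq0/f0.
Qed.

End L1_limits.

Definition clamp {R : realDomainType} (a b x : R) := Num.max a (Num.min x b).

Section clamp.
Context {R : realDomainType} (a b : R).
Hypothesis ab : a <= b.

Lemma clamp_ge x : a <= clamp a b x.
Proof. by rewrite le_max lexx. Qed.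

Lemma clamp_le x : clamp a b x <= b.
Proof. by rewrite ge_max ab ge_min lexx orbT. Qed.

Lemma clamp_nondecreasing : {homo clamp a b : x y / x <= y}.
Proof. by move=> x y xy; apply: le_max2 => //; apply: le_min2. Qed.

Lemma clamp_id x : a <= x <= b -> clamp a b x = x.
Proof. by case/andP=> ax xb; rewrite /clamp min_l // max_r. Qed.

End clamp.

Section H2l_graph.
Context {R : realType} {l : R} {h : R -> R}.
Hypothesis hH : H2l l h.

Lemma H2l_nonincreasing_left x y : 0 <= x -> x <= y -> y <= l -> h y <= h x.
Proof.
have [h_convex _ h_sym] := hH => x_ge0 xy yl.
have [xl|xl] := eqVneq x l.
  by have -> : y = x by apply/eqP; rewrite eq_le xy xl yl.
have xl' : x < l by rewrite lt_neqAle xl (le_trans xy yl).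
pose t := (2 * l - x - y) / (2 * l - 2 * x).
have t_ge0 : 0 <= t by apply: divr_ge0; lra.
have t_le1 : t <= 1 by rewrite ler_pdivrMr; lra.
have -> : y = t * x + (1 - t) * (2 * l - x) by rewrite /t; field; lra.
have -> : h x = t * h x + (1 - t) * h (2 * l - x) by rewrite -h_sym; [ring | lra].
by apply: h_convex; apply/andP; lra.
Qed.

Lemma H2l_nondecreasing_right x y : l <= x -> x <= y -> y <= 2 * l -> h x <= h y.
Proof.
have [_ _ h_sym] := hH => lx xy y_le2l.
rewrite h_sym ?(h_sym y); try (apply/andP; lra).
apply: H2l_nonincreasing_left; lra.
Qed.

(* h itself is not known to be measurable, but it is monotone on each half of [0, 2l]. *)
Lemma H2l_graph_cover : 0 < l -> exists g1 g2 : R -> R,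
  [/\ measurable_fun setT g1, measurable_fun setT g2 &
      forall x, 0 < x < 2 * l -> h x = g1 x \/ h x = g2 x].
Proof.
move=> l_gt0; have l_ge0 : 0 <= l by lra.
have l_le2l : l <= 2 * l by lra.
exists (h \o clamp 0 l), (h \o clamp l (2 * l)); split.
- apply: nonincreasing_measurable => // x y xy.
  by apply: H2l_nonincreasing_left; rewrite ?clamp_ge ?clamp_le ?clamp_nondecreasing.
- apply: nondecreasing_measurable => // x y xy.
  by apply: H2l_nondecreasing_right; rewrite ?clamp_ge ?clamp_le ?clamp_nondecreasing.
- move=> x /andP[x_gt0 x_lt2l]; have [xl|lx] := leP x l.
    by left; rewrite /= clamp_id //; apply/andP; lra.
  by right; rewrite /= clamp_id //; apply/andP; lra.
Qed.

End H2l_graph.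

(* Instance inference does not find this filter through the product measure by itself. *)
#[export] Instance leb2_ae_filter (R : realType) :
  Filter (almost_everywhere (leb2 (R:=R))).
Proof. exact: ae_filter_ringOfSetsType. Qed.

Lemma graph_leb2_negligible {R : realType} {g : R -> R} : measurable_fun setT g ->
  {ae leb2 (R:=R), forall w : R * R, w.2 <> g w.1}.
Proof.
move=> mg; exists [set w | w.2 = g w.1]; split => [||w /= /contrapT //].
- have mdiff : measurable_fun setT (fun w : R * R => w.2 - g w.1).
    exact: measurable_funB measurable_snd (measurableT_comp mg measurable_fst).
  have := mdiff measurableT [set 0] (measurable_set1 0).
  rewrite setTI; congr measurable; apply/seteqP; split => w /=.
    by move/eqP; rewrite subr_eq0 => /eqP.
  by move=> ->; rewrite subrr.
- rewrite /leb2 /product_measure1 /= (eq_integral (fun _ => 0%E)) ?integral0 //.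
  move=> x _ /=; rewrite (_ : xsection _ x = [set g x]) ?lebesgue_measure_set1 //.
  by apply/seteqP; split => y /=; rewrite /xsection /= inE.
Qed.

Lemma H2l_graph_negligible {R : realType} {l : R} {h : R -> R} : 0 < l -> H2l l h ->
  {ae leb2 (R:=R), forall w : R * R, 0 < w.1 < 2 * l -> w.2 <> h w.1}.
Proof.
move=> l_gt0 hH; have [g1 [g2 [mg1 mg2 h_g]]] := H2l_graph_cover hH l_gt0.
move: (graph_leb2_negligible mg1) (graph_leb2_negligible mg2).
by apply: filterS2 => w ng1 ng2 /h_g [] ->.
Qed.

Lemma Rect_measurable {R : realType} (l : R) : measurable (Rect l).
Proof.
have -> : Rect l = `]0, 2 * l[ `*` `]-1, 1[.
  by apply/seteqP; split => w; rewrite /Rect /= !in_itv.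
by apply: measurableX; exact: measurable_itv.
Qed.

Lemma BV_measurable {R : realType} {l : R} {psi : R * R -> R} :
  BV l psi -> measurable_fun (Rect l) psi.
Proof. by case=> /measurable_int /measurable_EFinP. Qed.

Theorem lemma12p8 (R : realType) (l : R) (hl : 0 < l)
    (hs : nat -> R -> R) (psis : nat -> R * R -> R)
    (h : R -> R) (psi : R * R -> R) :
  (forall n, Xconv l (hs n) (psis n)) ->
  H2l l h ->
  (forall K : set R, compact K -> K `<=` `]0, 2 * l[ ->
     forall e : R, 0 < e -> exists N : nat, forall n : nat, (N <= n)%N ->
       forall x, K x -> `|hs n x - h x| < e) ->
  BV l psi ->
  ((fun n => \int[leb2 (R:=R)]_(w in Rect l) (`|psis n w - psi w|)%:E)%E
     @ \oo --> 0%E) ->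
  Xconv l h psi.
Proof.
move=> hX hH hs_cvg hBV psis_cvg.
have mpsis n : measurable_fun (Rect l) (psis n) by case: (hX n) => _ /BV_measurable.
have [mR mpsi] := (Rect_measurable l, BV_measurable hBV).
split => //.
  apply: (L1_limit_ae_itv (mu := leb2 (R:=R)) mR mpsi mpsis psis_cvg).
  by move=> n; case: (hX n).
have psi_vanish := ae_foralln (L1_limit_ae_eq0 (mu := leb2 (R:=R)) mR mpsi mpsis psis_cvg).
have psis_vanish := ae_foralln (fun n => let: And4 _ _ _ v := hX n in v).
move: psi_vanish psis_vanish (H2l_graph_negligible hl hH).
apply: filterS3 => w psi_vanish psis_vanish off_graph Rw not_SG.
have w1_in : 0 < w.1 < 2 * l by case: Rw.
have h_below : h w.1 < w.2.
  have [//|w2_le] := ltP (h w.1) w.2.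
  by case: not_SG; split; rewrite // lt_neqAle w2_le andbT; apply/eqP/off_graph.
have w1_set : [set w.1] `<=` `]0, 2 * l[ by move=> x ->; rewrite /= in_itv.
have gap_gt0 : 0 < w.2 - h w.1 by rewrite subr_gt0.
have [N hs_near] := hs_cvg _ (@compact_set1 R w.1) w1_set _ gap_gt0.
apply: (psi_vanish N Rw) => n Nn; apply: psis_vanish Rw _ => -[_].
have := hs_near n Nn w.1 erefl; rewrite ltr_norml => /andP[_]; lra.
Qed.
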